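(* For every integer $a \ge 3$, every $b \in \mathbb{N}$ and every cycle graph $C_a$ of order $a$, $R_\mathrm{ord}(C_a, P_b^\mathrm{mon}) = 1 + (a-1)(b-1)$.
   Context: All graphs are finite, simple and undirected, and a graph of order $n$ has vertex set $\{0,1,\ldots,n-1\}$; $K_n$ is the complete graph on $\{0,\ldots,n-1\}$. A cycle graph of order $a$ is any graph on $\{0,\ldots,a-1\}$ whose edges form a single Hamiltonian cycle (in any vertex order). A $2$-edge-coloring of $K_n$ assigns each edge a color in $\{1,2\}$. An increasing embedding of $H$ in color $j$ is an injective map $\varphi\colon V(H)\to V(K_n)$ with $\varphi(0)<\cdots<\varphi(|H|-1)$ such that every edge $uv$ of $H$ goes to an edge $\{\varphi(u),\varphi(v)\}$ of color $j$. $R_\mathrm{ord}(H_1,H_2)$ is the smallest $n$ such that every $2$-edge-coloring of $K_n$ admits an increasing embedding of $H_1$ in color $1$ or of $H_2$ in color $2$. The monotone path $P_n^\mathrm{mon}$ has edges $\{i,i+1\}$, $0\le i\le n-2$. *)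

From mathcomp Require Import all_boot fingroup perm.
Set Implicit Arguments. Unset Strict Implicit. Unset Printing Implicit Defensive.

(* A graph of order m: a (symmetric, irreflexive) edge relation on 'I_m = {0,..,m-1}. *)
Definition graph (m : nat) := rel 'I_m.

(* A cycle graph of order a: the edges form one Hamiltonian cycle
   s 0 - s 1 - ... - s (a-1) - s 0, for some vertex ordering s. *)
Definition is_cycle_graph (a : nat) (E : graph a) : Prop :=
  exists s : {perm 'I_a}, forall u v : 'I_a,
    E u v = [exists i : 'I_a,
               ((u == s i) && (v == s (ordS i))) || ((v == s i) && (u == s (ordS i)))].

Definition Pmon (b : nat) : graph b :=
  fun u v => (val v == (val u).+1) || (val u == (val v).+1).
Arguments Pmon b : clear implicits.

(* A 2-edge-colouring of K_n: colour c i j in {1,2} for every edge {i,j}, i <> j,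
   symmetric (the value on the diagonal is irrelevant). *)
Definition is_2coloring (n : nat) (c : 'I_n -> 'I_n -> nat) : Prop :=
  forall i j : 'I_n, i != j -> c i j = c j i /\ (c i j = 1 \/ c i j = 2).

Definition incr_embedding (m n : nat) (H : graph m) (c : 'I_n -> 'I_n -> nat)
    (col : nat) : Prop :=
  exists phi : 'I_m -> 'I_n,
    (forall u v : 'I_m, val u < val v -> val (phi u) < val (phi v)) /\
    (forall u v : 'I_m, H u v -> c (phi u) (phi v) = col).

Definition ord_ramsey_prop (m1 m2 : nat) (H1 : graph m1) (H2 : graph m2) (n : nat) : Prop :=
  forall c : 'I_n -> 'I_n -> nat, is_2coloring c ->
    incr_embedding H1 c 1 \/ incr_embedding H2 c 2.

Definition is_Rord (m1 m2 : nat) (H1 : graph m1) (H2 : graph m2) (N : nat) : Prop :=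
  ord_ramsey_prop H1 H2 N /\ (forall n, n < N -> ~ ord_ramsey_prop H1 H2 n).

(* Upper bound (a Mirsky-type peeling): a vertex set S of size > (a-1)k
   contains a colour-1 clique on a vertices or the first vertex of a colour-2
   increasing path on k+1 vertices.  Let M be the vertices of S that are not
   the right end of a colour-2 edge inside S; any two of them span a colour-1
   edge.  So either |M| >= a, or |M| < a and, by induction on k, S \ M holds
   the first vertex of a colour-2 path on k vertices, which, not being in M,
   extends the path backwards inside S.
   Lower bound: cut {0,...,n-1} into consecutive blocks of a-1 vertices and
   colour an edge 1 iff its ends lie in the same block.  A connected graph
   embedded in colour 1 stays in one block, which has fewer than a vertices,
   while a colour-2 monotone path enters a later block at each step and there
   are at most b-1 blocks. *)

From mathcomp Require Import all_boot fingroup perm.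
From mathcomp Require Import zify.

Set Implicit Arguments.
Unset Strict Implicit.
Unset Printing Implicit Defensive.

Lemma pairwise_lt_enum n (A : {pred 'I_n}) :
  pairwise (fun x y : 'I_n => x < y) (enum A).
Proof.
rewrite /enum_mem -enumT; apply: pairwise_filter.
have := iota_ltn_sorted 0 n; rewrite sorted_pairwise; last exact: ltn_trans.
by rewrite -val_enum_ord pairwise_map.
Qed.

Section UpperBound.

Variables (n : nat) (c : 'I_n -> 'I_n -> nat).
Hypothesis c2 : is_2coloring c.

Definition lt_color col : rel 'I_n := fun x y => (x < y) && (c x y == col).

Lemma colorC (x y : 'I_n) : x != y -> c x y = c y x.
Proof. by move/c2 => []. Qed.

Lemma color1_of_not2 (x y : 'I_n) : x != y -> c x y != 2 -> c x y = 1.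
Proof. by move/c2 => [_ [|->]]. Qed.

Lemma incr_embedding_tuple m (H : graph m) col (t : m.-tuple 'I_n) :
  (forall u, ~~ H u u) -> pairwise (fun x y : 'I_n => x < y) t ->
  (forall u v : 'I_m, u < v -> H u v || H v u -> c (tnth t u) (tnth t v) = col) ->
  incr_embedding H c col.
Proof.
move=> H_loopless t_lt t_col.
have t_incr (u v : 'I_m) : u < v -> tnth t u < tnth t v.
  rewrite (tnth_nth (tnth t u) t u) (tnth_nth (tnth t u) t v).
  by apply: (pairwiseP _ t_lt); rewrite inE size_tuple.
exists (tnth t); split=> [|u v Huv]; first exact: t_incr.
case: (ltngtP u v) => [uv | vu | /val_inj uv].
- by apply: t_col; rewrite ?Huv.
- rewrite colorC; first by apply: t_col; rewrite ?Huv ?orbT.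
  by apply: contraTneq (t_incr _ _ vu) => ->; rewrite ltnn.
- by move: Huv; rewrite uv (negbTE (H_loopless v)).
Qed.

Lemma incr_embedding_clique m (H : graph m) col (t : m.-tuple 'I_n) :
  (forall u, ~~ H u u) -> pairwise (lt_color col) t -> incr_embedding H c col.
Proof.
move=> H_loopless t_clique; apply: incr_embedding_tuple H_loopless _ _.
  by apply: sub_pairwise t_clique => x y /andP[].
move=> u v uv _; rewrite (tnth_nth (tnth t u) t u) (tnth_nth (tnth t u) t v).
have := pairwiseP (tnth t u) t_clique u v; rewrite !inE size_tuple.
by move=> /(_ (ltn_ord u) (ltn_ord v) uv) /andP[_ /eqP].
Qed.

Lemma incr_embedding_path m col (t : m.-tuple 'I_n) :
  sorted (lt_color col) t -> incr_embedding (Pmon m) c col.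
Proof.
move=> t_path; apply: incr_embedding_tuple.
- by move=> u; rewrite /Pmon orbb ltn_eqF.
- rewrite -sorted_pairwise; last by move=> y x z; apply: ltn_trans.
  by apply: sub_sorted t_path => x y /andP[].
- move=> u v uv Huv; have vE : val v = u.+1.
    by move: Huv uv; rewrite /Pmon /= => /orP[] /orP[] /eqP; lia.
  rewrite (tnth_nth (tnth t u) t u) (tnth_nth (tnth t u) t v) vE.
  have := sortedP (tnth t u) t_path u; rewrite size_tuple -vE.
  by move=> /(_ (ltn_ord v)) /andP[_ /eqP].
Qed.

Lemma clique_or_path (a k : nat) (S : {set 'I_n}) : (a - 1) * k < #|S| ->
  (exists t : a.-tuple 'I_n, pairwise (lt_color 1) t) \/
  (exists x p, [/\ x \in S, path (lt_color 2) x p & size p = k]).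
Proof.
elim: k S => [|k IHk] S.
  by rewrite muln0 card_gt0 => /set0Pn[x Sx]; right; exists x, [::].
pose M := [set y in S | [forall (x | x \in S), (x < y) ==> (c x y != 2)]].
have [aM | Msmall] := leqP a #|M|; [left | move=> HS].
  have size_clique : size (take a (enum M)) == a by rewrite size_takel -?cardE.
  exists (Tuple size_clique); apply: subseq_pairwise (take_subseq _ _) _.
  apply: (@sub_in_pairwise _ (mem M) _ _ _ _ _ (pairwise_lt_enum M)); last first.
    by apply/allP=> x; rewrite mem_enum.
  move=> x y; rewrite !inE => /andP[Sx _] /andP[_ /forall_inP/(_ x Sx)] imp xy.
  rewrite /lt_color xy color1_of_not2 ?(implyP imp) //.
  by apply: contraTneq xy => ->; rewrite ltnn.
have: (a - 1) * k < #|S :\: M|.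
  rewrite cardsDS; last by apply/subsetP=> x; rewrite inE => /andP[].
  by move: HS Msmall; lia.
case/IHk => [|[x [p [xSM xp sizep]]]]; first by left.
right; move: xSM; rewrite !inE => /andP[xM xS]; rewrite xS /= in xM.
case/forall_inPn: xM => y Sy; rewrite negb_imply negbK => /andP[yx cyx].
by exists y, (x :: p); split; rewrite //= ?sizep // xp andbT /lt_color yx.
Qed.

End UpperBound.

Lemma ord_ramsey_upper (a b : nat) (H : graph a) : 0 < b -> (forall u, ~~ H u u) ->
  ord_ramsey_prop H (Pmon b) (1 + (a - 1) * (b - 1)).
Proof.
move=> b_gt0 H_loopless c c2.
have card_all : (a - 1) * (b - 1) < #|[set: 'I_(1 + (a - 1) * (b - 1))]|.
  by rewrite cardsT card_ord add1n.
have [[t t_clique] | [x [p [_ xp sizep]]]] := clique_or_path c2 card_all.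
- by left; exact (incr_embedding_clique c2 H_loopless t_clique).
have size_path : size (x :: p) == b by rewrite /= sizep; lia.
by right; apply: (incr_embedding_path c2 (t := Tuple size_path)).
Qed.

Definition block_coloring (d n : nat) (i j : 'I_n) : nat :=
  if i %/ d == j %/ d then 1 else 2.
Arguments block_coloring d n : clear implicits.

Lemma block_coloring_2coloring d n : is_2coloring (block_coloring d n).
Proof. by move=> i j _; rewrite /block_coloring eq_sym; case: ifP; auto. Qed.

Lemma incr_ord_inj m n (phi : 'I_m -> 'I_n) :
  (forall u v : 'I_m, u < v -> phi u < phi v) -> injective phi.
Proof.
move=> phi_incr u v phi_uv.
by case: (ltngtP u v) => [/phi_incr | /phi_incr | /val_inj //]; rewrite phi_uv ltnn.
Qed.

Lemma block_coloring_no_connected m n (H : graph m) : 1 < m ->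
  (forall u v, connect H u v) -> ~ incr_embedding H (block_coloring m.-1 n) 1.
Proof.
move=> m_gt1 H_connected [phi [phi_incr phi_col]].
have d_gt0 : 0 < m.-1 by rewrite -subn1 subn_gt0.
pose u0 : 'I_m := Ordinal (ltnW m_gt1).
have same_block u : phi u %/ m.-1 = phi u0 %/ m.-1.
  have block_closed : closed H [pred v | phi v %/ m.-1 == phi u0 %/ m.-1].
    move=> x y /phi_col; rewrite /block_coloring !inE.
    by case: eqP => // ->.
  have := closed_connect block_closed (H_connected u0 u).
  by rewrite !inE eqxx => /esym/eqP.
have rem_inj : injective (fun u => Ordinal (ltn_pmod (phi u) d_gt0)).
  move=> u v /(congr1 val) /= uv_mod.
  apply: incr_ord_inj phi_incr _ _ _; apply: val_inj.
  by rewrite /= (divn_eq (phi u) m.-1) (divn_eq (phi v) m.-1) uv_mod !same_block.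
by have := leq_card _ rem_inj; rewrite !card_ord leqNgt ltn_predL (ltnW m_gt1).
Qed.

Lemma block_coloring_no_path d n b : 0 < d -> 0 < b -> n <= d * (b - 1) ->
  ~ incr_embedding (Pmon b) (block_coloring d n) 2.
Proof.
move=> d_gt0 b_gt0 n_le [phi [phi_incr phi_col]].
have block_ge j (lt_jb : j < b) : j <= phi (Ordinal lt_jb) %/ d.
  elim: j lt_jb => [//|j IHj] lt_jb; have lt_j := ltnW lt_jb.
  have edge_j : Pmon b (Ordinal lt_j) (Ordinal lt_jb) by rewrite /Pmon /= eqxx.
  have := phi_col _ _ edge_j; rewrite /block_coloring; case: eqP => // blocks_neq _.
  have := leq_div2r d (ltnW (phi_incr _ _ (ltnSn j : Ordinal lt_j < Ordinal lt_jb))).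
  by have := IHj lt_j; rewrite /=; lia.
have lt_b : b.-1 < b by rewrite prednK.
have := block_ge _ lt_b; apply/negP; rewrite -ltnNge ltn_divLR //.
by apply: leq_trans (ltn_ord _) _; rewrite mulnC -subn1.
Qed.

Lemma ord_ramsey_lower m b n (H : graph m) : 1 < m -> 0 < b ->
  (forall u v, connect H u v) -> n <= (m - 1) * (b - 1) -> ~ ord_ramsey_prop H (Pmon b) n.
Proof.
move=> m_gt1 b_gt0 H_connected n_le H_ramsey.
have [] := H_ramsey _ (@block_coloring_2coloring m.-1 n).
  exact: block_coloring_no_connected.
by apply: block_coloring_no_path; rewrite -?subn1 ?subn_gt0.
Qed.

Lemma cycle_graph_loopless a (C : graph a) : 1 < a -> is_cycle_graph C ->
  forall u, ~~ C u u.
Proof.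
move=> a_gt1 [s Cs] u; rewrite Cs; apply/existsPn => i; rewrite orbb.
apply/andP => -[/eqP-> /eqP/perm_inj/(congr1 val)] /=.
have [lt_ia | le_ai] := ltnP i.+1 a; first by rewrite modn_small // => /n_Sn.
have ia : i.+1 = a by apply/eqP; rewrite eqn_leq le_ai ltn_ord.
by rewrite ia modnn => i0; move: a_gt1; rewrite -ia i0.
Qed.

Lemma cycle_graph_connected a (C : graph a) : is_cycle_graph C ->
  forall u v, connect C u v.
Proof.
move=> [s Cs] u v.
have C_sym : symmetric C by move=> x y; rewrite !Cs; apply: eq_existsb => i; rewrite orbC.
have a_gt0 : 0 < a := leq_ltn_trans (leq0n u) (ltn_ord u).
pose s0 := s (Ordinal a_gt0).
have reach_s i : connect C s0 (s i).
  case: i => j; elim: j => [|j IHj] lt_ja; first by rewrite /s0 (bool_irrelevance lt_ja a_gt0).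
  apply: connect_trans (IHj (ltnW lt_ja)) (connect1 _).
  have -> : Ordinal lt_ja = ordS (Ordinal (ltnW lt_ja)) by apply: val_inj; rewrite /= modn_small.
  by rewrite Cs; apply/existsP; exists (Ordinal (ltnW lt_ja)); rewrite !eqxx.
have reach w : connect C s0 w by rewrite -(permKV s w).
by apply: connect_trans (reach v); rewrite (sym_connect_sym C_sym).
Qed.

Theorem corollary4p3 (a b : nat) (C : graph a) :
  3 <= a -> 1 <= b -> is_cycle_graph C ->
  is_Rord C (Pmon b) (1 + (a - 1) * (b - 1)).
Proof.
move=> a_ge3 b_gt0 C_cycle; have a_gt1 : 1 < a := ltnW a_ge3.
split; first exact: ord_ramsey_upper b_gt0 (cycle_graph_loopless a_gt1 C_cycle).
move=> n; rewrite add1n ltnS => n_le.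
exact: ord_ramsey_lower a_gt1 b_gt0 (cycle_graph_connected C_cycle) n_le.
Qed.
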